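(* Let $r\geq 3$, let $X$ be a finite set of cardinality $n\geq 1$, and let $A_1,\dots,A_r\subseteq X$. For $k\in\{1,\dots,r\}$ put $$S_k=\sum_{1\leq i_1<\dots<i_k\leq r}\left|A_{i_1}\cap\dots\cap A_{i_k}\right|.$$ Then for every $1\leq k\leq r$, $$S_k\geq\binom{\lfloor S_1/n\rfloor}{k-1}\left(S_1-\frac{k-1}{k}\left(\lfloor S_1/n\rfloor+1\right)n\right).$$ *)

From mathcomp Require Import all_boot all_order all_algebra.
Set Implicit Arguments. Unset Strict Implicit. Unset Printing Implicit Defensive.

Definition Sk (T : finType) (r : nat) (A : 'I_r -> {set T}) (k : nat) : nat :=
  \sum_(I : {set 'I_r} | #|I| == k) #|\bigcap_(i in I) A i|.

From mathcomp Require Import all_boot all_order all_algebra.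
From mathcomp Require Import ring lra.
Import Order.TTheory GRing.Theory Num.Theory.

(* Double counting turns S_k into sum_x C(d_x, k), where d_x is the number of
   sets containing x; in particular S_1 = sum_x d_x.  Since d |-> C(d, k) is
   convex, its graph lies above the chord through m and m + 1, whose slope is
   C(m, k - 1).  With C(m, k) = C(m, k - 1) (m - k + 1) / k this gives
   C(d, k) >= C(m, k - 1) (d - (k - 1)(m + 1) / k) for every natural m, and
   summing over x yields the theorem for any m, in particular m = floor(S_1/n). *)

Lemma Sk_sum_bin (T : finType) (r : nat) (A : 'I_r -> {set T}) (k : nat) :
  Sk A k = \sum_(x : T) 'C(#|[set i | x \in A i]|, k).
Proof.
transitivity (\sum_(I : {set 'I_r} | #|I| == k)
                \sum_(x : T) (x \in \bigcap_(i in I) A i : nat)).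
  by apply: eq_bigr => I _; rewrite -sum1_card big_mkcond.
rewrite exchange_big; apply: eq_bigr => x _.
rewrite -cards_draws -sum1_card big_mkcond [RHS]big_mkcond /=.
apply: eq_bigr => I _; rewrite inE.
have -> : (x \in \bigcap_(i in I) A i) = (I \subset [set i | x \in A i]).
  apply/bigcapP/subsetP => [xA i iI | xA i /xA]; rewrite inE //.
  exact: xA.
by case: (I \subset _); case: (#|I| == k).
Qed.

Lemma bin_telescope (k : nat) {m d : nat} : (m <= d)%N ->
  'C(d, k.+1) = ('C(m, k.+1) + \sum_(m <= i < d) 'C(i, k))%N.
Proof.
move=> /subnKC <-; elim: (d - m)%N => [|j IH]; first by rewrite addn0 big_geq ?addn0.
by rewrite addnS binS IH big_nat_recr ?leq_addr //= addnA.
Qed.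

Lemma bin_chord_right (k : nat) {m d : nat} : (m <= d)%N ->
  ('C(m, k.+1) + (d - m) * 'C(m, k) <= 'C(d, k.+1))%N.
Proof.
move=> le_md; rewrite (bin_telescope k le_md) leq_add2l -sum_nat_const_nat.
rewrite !big_nat; apply: leq_sum => i /andP[le_mi _]; exact: leq_bin2l.
Qed.

Lemma bin_chord_left (k : nat) {m d : nat} : (d <= m)%N ->
  ('C(m, k.+1) <= 'C(d, k.+1) + (m - d) * 'C(m, k))%N.
Proof.
move=> le_dm; rewrite (bin_telescope k le_dm) leq_add2l -sum_nat_const_nat.
rewrite !big_nat; apply: leq_sum => i /andP[_ lt_im]; exact/leq_bin2l/ltnW.
Qed.

Local Open Scope ring_scope.

Lemma bin_above_chord (m d k : nat) :
  ('C(m, k.+1))%:R + ('C(m, k))%:R * (d%:R - m%:R) <= ('C(d, k.+1))%:R :> rat.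
Proof.
have [le_md | /ltnW le_dm] := leqP m d.
  by have := bin_chord_right k le_md; rewrite -(ler_nat rat) natrD natrM natrB // mulrC.
have := bin_chord_left k le_dm; rewrite -(ler_nat rat) natrD natrM natrB //.
by move=> ?; lra.
Qed.

Lemma binS_ratio (m k : nat) : (k <= m)%N ->
  ('C(m, k.+1))%:R = ('C(m, k))%:R * (m%:R - k%:R) / k.+1%:R :> rat.
Proof.
move=> le_km; rewrite -natrB // -natrM mulnC -mul_bin_left natrM.
by rewrite mulrAC divff ?mul1r // pnatr_eq0.
Qed.

Lemma binS_lower_bound (m d k : nat) :
  ('C(m, k))%:R * (d%:R - k%:R / k.+1%:R * m.+1%:R) <= ('C(d, k.+1))%:R :> rat.
Proof.
have [le_km | lt_mk] := leqP k m; last by rewrite bin_small // mul0r.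
apply: le_trans (bin_above_chord m d k); rewrite binS_ratio //.
by rewrite le_eqVlt; apply/orP; left; apply/eqP; field; rewrite nat1r pnatr_eq0.
Qed.

Theorem theorem3 (T : finType) (r : nat) (A : 'I_r -> {set T}) (k : nat) :
  (3 <= r)%N -> (1 <= #|T|)%N -> (1 <= k <= r)%N ->
  ((Sk A k)%:R : rat) >=
    ('C((Sk A 1) %/ #|T|, k.-1))%:R *
    ((Sk A 1)%:R - (k.-1)%:R / k%:R * ((Sk A 1) %/ #|T|).+1%:R * (#|T|)%:R).
Proof.
move=> _ _ /andP[k_gt0 _].
set m := (Sk A 1 %/ #|T|)%N.
case: k k_gt0 => [//|k] _ /=.
have S1E : (Sk A 1)%:R = \sum_(x : T) (#|[set i | x \in A i]|)%:R :> rat.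
  by rewrite Sk_sum_bin natr_sum; apply: eq_bigr => x _; rewrite bin1.
have cardTE : (#|T|)%:R = \sum_(x : T) 1 :> rat by rewrite -sum1_card natr_sum.
rewrite S1E cardTE Sk_sum_bin natr_sum mulr_sumr -sumrB mulr_sumr.
by apply: ler_sum => x _; rewrite mulr1; exact: binS_lower_bound.
Qed.
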